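(* Let $\mathbb C$ be a pointed category with finite limits and finite colimits, and let $w\colon W\to A$, $x\colon X\to A$, $y\colon Y\to A$ be morphisms in $\mathbb C$. If $p\colon A_3\to A$ is an internal pregroupoid structure on the span $A/X \leftarrow A \rightarrow A/Y$, then $p\gamma_w\colon (W+X)\times_W(W+Y)\to A$ is an internal multiplication $X\times Y\to A$ over $(W,w)$.
   Context: Notation: $\iota_1,\iota_2,\dots$ denote coproduct injections, $[a,b]$ (resp. $[a,b,c]$) the morphism out of a coproduct with components $a,b$ (resp. $a,b,c$), $\langle a,b\rangle$ the morphism into a (fibred) product with components $a,b$, and $1$, $0$ identity and zero morphisms. $(W+X)\times_W(W+Y)$ denotes the pullback of $[1,0]\colon W+X\to W$ and $[1,0]\colon W+Y\to W$, with projections $\pi_1,\pi_2$. An internal multiplication $X\times Y\to A$ over $(W,w)$ is a morphism $m\colon (W+X)\times_W(W+Y)\to A$ with $m\langle 1,\iota_1[1,0]\rangle=[w,x]\colon W+X\to A$ and $m\langle \iota_1[1,0],1\rangle=[w,y]\colon W+Y\to A$. $A/X$ and $A/Y$ denote the codomains of $\mathsf{coker}(x)$ and $\mathsf{coker}(y)$, and $A_3=A\times_{A/X}A\times_{A/Y}A$ is the limit of $A\xrightarrow{\mathsf{coker}(x)}A/X\xleftarrow{\mathsf{coker}(x)}A\xrightarrow{\mathsf{coker}(y)}A/Y\xleftarrow{\mathsf{coker}(y)}A$, with three projections to $A$. $\gamma_w\colon (W+X)\times_W(W+Y)\to A_3$ is the morphism $\langle [w,x]\pi_1,[w,0]\pi_1,[w,y]\pi_2\rangle$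 (note $[w,0]\pi_1=[w,0]\pi_2$). An internal pregroupoid structure on the span $A/X\leftarrow A\to A/Y$ (the two legs being $\mathsf{coker}(x)$ and $\mathsf{coker}(y)$) is a morphism $p\colon A_3\to A$ such that $p\langle\pi_1,\pi_2,\pi_2\rangle=\pi_1$ as morphisms $A\times_{A/X}A\to A$ and $p\langle \pi_1,\pi_1,\pi_2\rangle=\pi_2$ as morphisms $A\times_{A/Y}A\to A$, where $\pi_1,\pi_2$ denote the kernel-pair projections. *)

Set Implicit Arguments.
Unset Strict Implicit.

Record Category := {
  Ob :> Type;
  Hom : Ob -> Ob -> Type;
  idm : forall A, Hom A A;
  comp : forall A B C, Hom B C -> Hom A B -> Hom A C;
  comp_assoc : forall A B C D (h : Hom C D) (g : Hom B C) (f : Hom A B),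
      comp h (comp g f) = comp (comp h g) f;
  comp_id_l : forall A B (f : Hom A B), comp (idm B) f = f;
  comp_id_r : forall A B (f : Hom A B), comp f (idm A) = f
}.

Arguments Hom {c} _ _.
Arguments idm {c} A.
Arguments comp {c A B C} _ _.
Notation "g \o f" := (comp g f) (at level 40, left associativity).

(* A pointed category with finite limits and finite colimits, presented by
   chosen universal constructions: a zero object (initial and terminal),
   pullbacks (with the terminal object these give all finite limits),
   binary coproducts and coequalizers (with the initial object these give
   all finite colimits).  Mediating morphisms are total functions whose
   defining equations and uniqueness are required whenever the relevant
   cone/cocone condition holds. *)
Record PointedFinBicomplete := {
  cat :> Category;
  zero_ob : cat;
  to_zero : forall A : cat, Hom A zero_ob;
  from_zero : forall A : cat, Hom zero_ob A;
  to_zero_uniq : forall (A : cat) (f : Hom A zero_ob), f = to_zero A;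
  from_zero_uniq : forall (A : cat) (f : Hom zero_ob A), f = from_zero A;
  coprod : cat -> cat -> cat;
  inj1 : forall A B : cat, Hom A (coprod A B);
  inj2 : forall A B : cat, Hom B (coprod A B);
  copair : forall (A B C : cat), Hom A C -> Hom B C -> Hom (coprod A B) C;
  copair_inj1 : forall A B C (f : Hom A C) (g : Hom B C),
      copair f g \o inj1 A B = f;
  copair_inj2 : forall A B C (f : Hom A C) (g : Hom B C),
      copair f g \o inj2 A B = g;
  copair_uniq : forall A B C (f : Hom A C) (g : Hom B C) (u : Hom (coprod A B) C),
      u \o inj1 A B = f -> u \o inj2 A B = g -> u = copair f g;
  pb : forall (A B C : cat), Hom A C -> Hom B C -> cat;
  pb1 : forall A B C (f : Hom A C) (g : Hom B C), Hom (pb f g) A;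
  pb2 : forall A B C (f : Hom A C) (g : Hom B C), Hom (pb f g) B;
  pb_comm : forall A B C (f : Hom A C) (g : Hom B C), f \o pb1 f g = g \o pb2 f g;
  pbpair : forall A B C (f : Hom A C) (g : Hom B C) (D : cat),
      Hom D A -> Hom D B -> Hom D (pb f g);
  pbpair_1 : forall A B C (f : Hom A C) (g : Hom B C) D (h : Hom D A) (k : Hom D B),
      f \o h = g \o k -> pb1 f g \o pbpair f g h k = h;
  pbpair_2 : forall A B C (f : Hom A C) (g : Hom B C) D (h : Hom D A) (k : Hom D B),
      f \o h = g \o k -> pb2 f g \o pbpair f g h k = k;
  pbpair_uniq : forall A B C (f : Hom A C) (g : Hom B C) D (h : Hom D A) (k : Hom D B)
      (u : Hom D (pb f g)),
      f \o h = g \o k -> pb1 f g \o u = h -> pb2 f g \o u = k -> u = pbpair f g h k;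
  coeq_ob : forall (A B : cat), Hom A B -> Hom A B -> cat;
  coeq : forall A B (f g : Hom A B), Hom B (coeq_ob f g);
  coeq_comm : forall A B (f g : Hom A B), coeq f g \o f = coeq f g \o g;
  coeq_desc : forall A B (f g : Hom A B) (C : cat), Hom B C -> Hom (coeq_ob f g) C;
  coeq_desc_comm : forall A B (f g : Hom A B) C (h : Hom B C),
      h \o f = h \o g -> coeq_desc f g h \o coeq f g = h;
  coeq_desc_uniq : forall A B (f g : Hom A B) C (h : Hom B C) (u : Hom (coeq_ob f g) C),
      h \o f = h \o g -> u \o coeq f g = h -> u = coeq_desc f g h
}.

Arguments inj1 {p} A B.
Arguments inj2 {p} A B.
Arguments copair {p A B C} _ _.
Arguments pb {p A B C} _ _.
Arguments pb1 {p A B C} _ _.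
Arguments pb2 {p A B C} _ _.
Arguments pbpair {p A B C} _ _ {D} _ _.
Arguments coeq_ob {p A B} _ _.
Arguments coeq {p A B} _ _.

Section Constructions.
Variable C : PointedFinBicomplete.

Definition zmor (A B : C) : Hom A B := from_zero B \o to_zero A.

Definition fold10 (W X : C) : Hom (coprod W X) W := copair (idm W) (zmor X W).

Definition PBWXY (W X Y : C) : C := pb (fold10 W X) (fold10 W Y).
Definition piL (W X Y : C) : Hom (PBWXY W X Y) (coprod W X) := pb1 _ _.
Definition piR (W X Y : C) : Hom (PBWXY W X Y) (coprod W Y) := pb2 _ _.

Definition internal_multiplication (W X Y A : C)
    (w : Hom W A) (x : Hom X A) (y : Hom Y A) (m : Hom (PBWXY W X Y) A) : Prop :=
  m \o pbpair (fold10 W X) (fold10 W Y) (idm (coprod W X)) (inj1 W Y \o fold10 W X)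
    = copair w x /\
  m \o pbpair (fold10 W X) (fold10 W Y) (inj1 W X \o fold10 W Y) (idm (coprod W Y))
    = copair w y.

Definition coker (X A : C) (x : Hom X A) : Hom A (coeq_ob x (zmor X A)) :=
  coeq x (zmor X A).

Definition KP (A B : C) (f : Hom A B) : C := pb f f.

(* A_3 = A x_{A/X} A x_{A/Y} A, the limit of
   A -> A/X <- A -> A/Y <- A, built as an iterated pullback of kernel pairs *)
Section A3.
Variables (X Y A : C) (x : Hom X A) (y : Hom Y A).
Definition KX := KP (coker x).
Definition KY := KP (coker y).
Definition A3 : C := pb (pb2 (coker x) (coker x)) (pb1 (coker y) (coker y)).
Definition p3_1 : Hom A3 A := pb1 (coker x) (coker x) \o pb1 _ _.
Definition p3_2 : Hom A3 A := pb2 (coker x) (coker x) \o pb1 _ _.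
Definition p3_3 : Hom A3 A := pb2 (coker y) (coker y) \o pb2 _ _.
Definition triple (D : C) (a b c : Hom D A) : Hom D A3 :=
  pbpair (pb2 (coker x) (coker x)) (pb1 (coker y) (coker y))
    (pbpair (coker x) (coker x) a b) (pbpair (coker y) (coker y) b c).

Definition pregroupoid (p : Hom A3 A) : Prop :=
  p \o triple (pb1 (coker x) (coker x)) (pb2 (coker x) (coker x))
              (pb2 (coker x) (coker x)) = pb1 (coker x) (coker x) /\
  p \o triple (pb1 (coker y) (coker y)) (pb1 (coker y) (coker y))
              (pb2 (coker y) (coker y)) = pb2 (coker y) (coker y).
End A3.

Definition gamma (W X Y A : C) (w : Hom W A) (x : Hom X A) (y : Hom Y A)
    : Hom (PBWXY W X Y) (A3 x y) :=
  triple x y (copair w x \o piL W X Y) (copair w (zmor X A) \o piL W X Y)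
             (copair w y \o piR W X Y).

End Constructions.


Set Implicit Arguments.

(* Precomposing the pregroupoid identities with the pairing <a,b> of two
   morphisms equalized by coker x (resp. coker y) gives the Mal'tsev-type laws
   p<a,b,b> = a and p<b,b,c> = c.  On the two canonical sections of the
   projections of (W+X) x_W (W+Y), gamma_w becomes <[w,x],[w,0],[w,0]> and
   <[w,0],[w,0],[w,y]>: the cokernels identify [w,x] with [w,0], and [w,0]
   factors through the folding map [1,0] on which the two projections agree. *)

Section Basics.
Variable C : PointedFinBicomplete.

Lemma comp_copair (P Q R S : C) (f : Hom R S) (g : Hom P R) (h : Hom Q R) :
  f \o copair g h = copair (f \o g) (f \o h).
Proof.
  apply copair_uniq.
  - rewrite <- comp_assoc, copair_inj1; reflexivity.
  - rewrite <- comp_assoc, copair_inj2; reflexivity.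
Qed.

Lemma comp_zmor (P Q R : C) (f : Hom Q R) : f \o zmor P Q = zmor P R.
Proof.
  unfold zmor. rewrite comp_assoc. f_equal. apply from_zero_uniq.
Qed.

Lemma copair_zmor (W X A : C) (w : Hom W A) :
  copair w (zmor X A) = w \o fold10 W X.
Proof.
  unfold fold10. rewrite comp_copair, comp_id_r, comp_zmor. reflexivity.
Qed.

Lemma copair_inj1_fold10 (W X V A : C) (w : Hom W A) (v : Hom V A) :
  copair w v \o (inj1 W V \o fold10 W X) = copair w (zmor X A).
Proof. rewrite comp_assoc, copair_inj1, copair_zmor. reflexivity. Qed.

Lemma fold10_inj1_fold10 (W X V : C) :
  fold10 W V \o (inj1 W V \o fold10 W X) = fold10 W X.
Proof. unfold fold10 at 1. rewrite comp_assoc, copair_inj1, comp_id_l. reflexivity. Qed.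

Lemma coker_copair (W X A : C) (w : Hom W A) (x : Hom X A) :
  coker x \o copair w x = coker x \o copair w (zmor X A).
Proof. rewrite !comp_copair, coeq_comm. reflexivity. Qed.

Lemma pbpair_comp (P Q R D E : C) (f : Hom P R) (g : Hom Q R)
    (h : Hom D P) (k : Hom D Q) (u : Hom E D) :
  f \o h = g \o k -> pbpair f g h k \o u = pbpair f g (h \o u) (k \o u).
Proof.
  intro Hhk. apply pbpair_uniq.
  - rewrite !comp_assoc, Hhk; reflexivity.
  - rewrite comp_assoc, pbpair_1; auto.
  - rewrite comp_assoc, pbpair_2; auto.
Qed.

Lemma triple_comp (X Y A D E : C) (x : Hom X A) (y : Hom Y A)
    (a b c : Hom D A) (u : Hom E D) :
  coker x \o a = coker x \o b -> coker y \o b = coker y \o c ->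
  triple x y a b c \o u = triple x y (a \o u) (b \o u) (c \o u).
Proof.
  intros Hab Hbc. unfold triple.
  refine (eq_trans (pbpair_comp _ _ _ _ _ _ _ _ _ _ _) _).
  - rewrite pbpair_2, pbpair_1; auto.
  - f_equal; apply pbpair_comp; auto.
Qed.

Lemma piL_pbpair (W X Y D : C) (h : Hom D (coprod W X)) (k : Hom D (coprod W Y)) :
  fold10 W X \o h = fold10 W Y \o k ->
  piL W X Y \o pbpair (fold10 W X) (fold10 W Y) h k = h.
Proof. apply pbpair_1. Qed.

Lemma piR_pbpair (W X Y D : C) (h : Hom D (coprod W X)) (k : Hom D (coprod W Y)) :
  fold10 W X \o h = fold10 W Y \o k ->
  piR W X Y \o pbpair (fold10 W X) (fold10 W Y) h k = k.
Proof. apply pbpair_2. Qed.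

End Basics.

Section Pregroupoid.
Variables (C : PointedFinBicomplete) (X Y A : C) (x : Hom X A) (y : Hom Y A).
Variable p : Hom (A3 x y) A.
Hypothesis p_pregroupoid : pregroupoid p.

Lemma pregroupoid_abb (D : C) (a b : Hom D A) :
  coker x \o a = coker x \o b -> p \o triple x y a b b = a.
Proof.
  intro Hab. destruct p_pregroupoid as [HX _].
  assert (Habb : triple x y a b b =
      triple x y (pb1 (coker x) (coker x)) (pb2 (coker x) (coker x))
                 (pb2 (coker x) (coker x)) \o pbpair (coker x) (coker x) a b).
  { rewrite triple_comp by (apply pb_comm || reflexivity).
    rewrite pbpair_1, pbpair_2; auto. }
  rewrite Habb, comp_assoc, HX, pbpair_1; auto.
Qed.

Lemma pregroupoid_bbc (D : C) (b c : Hom D A) :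
  coker y \o b = coker y \o c -> p \o triple x y b b c = c.
Proof.
  intro Hbc. destruct p_pregroupoid as [_ HY].
  assert (Hbbc : triple x y b b c =
      triple x y (pb1 (coker y) (coker y)) (pb1 (coker y) (coker y))
                 (pb2 (coker y) (coker y)) \o pbpair (coker y) (coker y) b c).
  { rewrite triple_comp by (apply pb_comm || reflexivity).
    rewrite pbpair_1, pbpair_2; auto. }
  rewrite Hbbc, comp_assoc, HY, pbpair_2; auto.
Qed.

End Pregroupoid.

Section Gamma.
Variables (C : PointedFinBicomplete) (W X Y A : C).
Variables (w : Hom W A) (x : Hom X A) (y : Hom Y A).

Lemma gamma_comp (E : C) (u : Hom E (PBWXY W X Y)) :
  gamma w x y \o u =
  triple x y (copair w x \o (piL W X Y \o u))
             (copair w (zmor X A) \o (piL W X Y \o u))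
             (copair w y \o (piR W X Y \o u)).
Proof.
  unfold gamma. rewrite triple_comp.
  - rewrite !comp_assoc. reflexivity.
  - rewrite !comp_assoc, coker_copair. reflexivity.
  - rewrite !comp_assoc, coker_copair, !copair_zmor, <- !comp_assoc.
    unfold piL, piR. do 2 f_equal. apply pb_comm.
Qed.

Lemma gamma_section_left :
  gamma w x y \o pbpair (fold10 W X) (fold10 W Y)
                  (idm (coprod W X)) (inj1 W Y \o fold10 W X) =
  triple x y (copair w x) (copair w (zmor X A)) (copair w (zmor X A)).
Proof.
  rewrite gamma_comp, piL_pbpair, piR_pbpair
    by (rewrite comp_id_r, fold10_inj1_fold10; reflexivity).
  rewrite !comp_id_r, copair_inj1_fold10. reflexivity.
Qed.

Lemma gamma_section_right :
  gamma w x y \o pbpair (fold10 W X) (fold10 W Y)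
                  (inj1 W X \o fold10 W Y) (idm (coprod W Y)) =
  triple x y (copair w (zmor Y A)) (copair w (zmor Y A)) (copair w y).
Proof.
  rewrite gamma_comp, piL_pbpair, piR_pbpair
    by (rewrite comp_id_r, fold10_inj1_fold10; reflexivity).
  rewrite !comp_id_r, !copair_inj1_fold10. reflexivity.
Qed.

End Gamma.

Theorem theorem1p3 (C : PointedFinBicomplete) (W X Y A : C)
    (w : Hom W A) (x : Hom X A) (y : Hom Y A) (p : Hom (A3 x y) A) :
  pregroupoid p ->
  internal_multiplication w x y (p \o gamma w x y).
Proof.
  intro Hp. split; rewrite <- comp_assoc.
  - rewrite gamma_section_left.
    apply (pregroupoid_abb Hp), coker_copair.
  - rewrite gamma_section_right.
    apply (pregroupoid_bbc Hp). symmetry. apply coker_copair.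
Qed.
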